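(* Let $H$ be a Hilbert space and $T$ a densely defined closed operator on $H$ with closed range. The following are equivalent: (1) $T$ is selfadjoint; (2) $T=\overline{w(T^{*})T}\,T^{*}$; (3) $T^{*}=TT^{*}w(T)$.
   Context: For a densely defined closed operator $A$ with closed range, $A^{*}$ is its adjoint, $C(A)=D(A)\cap N(A)^{\perp}$, and the Moore–Penrose inverse $A^{\dagger}$ is defined on $R(A)\oplus^{\perp}R(A)^{\perp}$ by $A^{\dagger}y=(A|_{C(A)})^{-1}y$ for $y\in R(A)$ and $A^{\dagger}y=0$ for $y\in R(A)^{\perp}$. The generalized Cauchy dual is $w(A)=A(A^{*}A)^{\dagger}$; products of operators are on natural domains, and $\overline{B}$ is the closure of a closable operator $B$. *)

(* Unbounded (partially defined) linear operators on a Hilbert space are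
   represented by their graphs, i.e. relations  A : V -> V -> Prop
   (A x y  <->  x \in D(A) and A x = y).  *)
From mathcomp Require Import all_boot all_algebra.
From mathcomp Require Import complex.
From mathcomp Require Import reals.
Set Implicit Arguments.
Unset Strict Implicit.
Unset Printing Implicit Defensive.
Import GRing.Theory Num.Theory.
Local Open Scope ring_scope.
Local Open Scope complex_scope.

Section Hilbert.
Variables (R : realType) (V : lmodType R[i]).

Record is_inner_product (ip : V -> V -> R[i]) : Prop := IsInnerProduct {
  ip_linear : forall (a : R[i]) (x y z : V), ip (a *: x + y) z = a * ip x z + ip y z;
  ip_conj : forall x y : V, ip y x = (ip x y)^*;
  ip_ge0 : forall x : V, 0 <= ip x x;
  ip_eq0 : forall x : V, ip x x = 0 -> x = 0
}.

Definition op := V -> V -> Prop.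

Definition op_eq (A B : op) : Prop := forall x y, A x y <-> B x y.

Definition dom (A : op) : V -> Prop := fun x => exists y, A x y.
Definition range (A : op) : V -> Prop := fun y => exists x, A x y.
Definition kernel (A : op) : V -> Prop := fun x => A x 0.

Definition linear_op (A : op) : Prop :=
  A 0 0 /\
  (forall x y x' y', A x y -> A x' y' -> A (x + x') (y + y')) /\
  (forall (a : R[i]) x y, A x y -> A (a *: x) (a *: y)) /\
  (forall x y y', A x y -> A x y' -> y = y').

Definition op_mul (A B : op) : op := fun x z => exists y, B x y /\ A y z.

Variable ip : V -> V -> R[i].

Definition nsq (x : V) : R[i] := ip x x.

Definition converges_to (u : nat -> V) (x : V) : Prop :=
  forall e : R[i], 0 < e -> exists N : nat, forall n : nat, (N <= n)%N -> nsq (u n - x) < e.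

Definition cauchy_seq (u : nat -> V) : Prop :=
  forall e : R[i], 0 < e -> exists N : nat, forall n m : nat,
    (N <= n)%N -> (N <= m)%N -> nsq (u n - u m) < e.

Definition is_hilbert : Prop :=
  is_inner_product ip /\ forall u : nat -> V, cauchy_seq u -> exists x, converges_to u x.

(* sets: closed, dense (norm topology; sequential = topological in a metric space) *)
Definition closed_set (S : V -> Prop) : Prop :=
  forall (u : nat -> V) (x : V), (forall n, S (u n)) -> converges_to u x -> S x.

Definition dense_set (S : V -> Prop) : Prop :=
  forall x : V, exists u : nat -> V, (forall n, S (u n)) /\ converges_to u x.

Definition perp (S : V -> Prop) : V -> Prop :=
  fun y => forall x, S x -> ip x y = 0.

Definition densely_defined (A : op) : Prop := dense_set (dom A).

Definition closed_graph (A : op) : Prop :=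
  forall (u v : nat -> V) (x y : V),
    (forall n, A (u n) (v n)) -> converges_to u x -> converges_to v y -> A x y.

Definition closed_op (A : op) : Prop := linear_op A /\ closed_graph A.

Definition closed_range (A : op) : Prop := closed_set (range A).

Definition adjoint (A : op) : op :=
  fun y z => forall x w, A x w -> ip w y = ip x z.

Definition closure_op (A : op) : op :=
  fun x y => exists u v : nat -> V,
    (forall n, A (u n) (v n)) /\ converges_to u x /\ converges_to v y.

(* Moore-Penrose inverse: defined on R(A) (+) R(A)^perp,
   A^+ (y1 + y2) = (A|_{C(A)})^{-1} y1  for y1 in R(A), y2 in R(A)^perp,
   where C(A) = D(A) /\ N(A)^perp. *)
Definition mp_inverse (A : op) : op :=
  fun y z => exists y1 y2, y = y1 + y2 /\ range A y1 /\ perp (range A) y2 /\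
                           A z y1 /\ perp (kernel A) z.

Definition cauchy_dual (A : op) : op :=
  op_mul A (mp_inverse (op_mul (adjoint A) A)).

Definition selfadjoint (A : op) : Prop := op_eq A (adjoint A).

End Hilbert.

(* Both identities hold for every closed, densely defined T with closed range:
   closure(w(T^* ) T) T^* = T^* and T T^* w(T) = T, so (2) and (3) each say
   T = T^*.  Since T^** = T and, by a Hellinger-Toeplitz argument based on the
   uniform boundedness principle, R(T^* ) is closed as well, the space splits
   as R(T^* ) (+) N(T).  If P is the orthogonal projection onto R(T^* ), then
   w(T^* ) T = P on D(T), whose closure is P and P T^* = T^*; and (T^* T)^+ y
   depends only on P y, which yields T T^* w(T) = T. *)

From mathcomp Require Import all_boot all_order all_algebra complex reals.
From mathcomp Require Import boolp.
From mathcomp Require classical_sets.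
From mathcomp Require Import ring lra.
Set Implicit Arguments.
Unset Strict Implicit.
Unset Printing Implicit Defensive.
Import Order.TTheory GRing.Theory Num.Theory.
Local Open Scope ring_scope.
Local Open Scope complex_scope.

Local Notation Re := (@complex.Re _).
Local Notation normc := (@Normc.normc _).

Lemma mulcJ_normc (R : rcfType) (p : R[i]) : p * p^* = (normc p ^+ 2)%:C.
Proof.
case: p => a b; rewrite /= sqr_sqrtr ?addr_ge0 ?sqr_ge0 //.
by apply/eqP; rewrite eq_complex /=; apply/andP; split; apply/eqP; ring.
Qed.

Lemma normc_ge0 (R : rcfType) (p : R[i]) : 0 <= normc p.
Proof. by case: p => a b; exact: sqrtr_ge0. Qed.

Lemma normcJ (R : rcfType) (p : R[i]) : normc p^* = normc p.
Proof. by case: p => a b; rewrite /= sqrrN. Qed.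

Lemma normcR (R : rcfType) (r : R) : normc r%:C = `|r|.
Proof. by rewrite /= expr0n addr0 sqrtr_sqr. Qed.

Lemma Re_le_normc (R : rcfType) (p : R[i]) : Re p <= normc p.
Proof.
case: p => a b /=; rewrite (le_trans (ler_norm a)) // -sqrtr_sqr ler_wsqrtr //.
by rewrite lerDl sqr_ge0.
Qed.

Lemma normc_distD (R : rcfType) (a b c : R[i]) :
  normc (a - c) <= normc (a - b) + normc (b - c).
Proof. by rewrite -[a - c](subrKA b) le_normcD. Qed.

Lemma half_gt0 (R : numFieldType) (e : R) : 0 < e -> 0 < e / 2.
Proof. by move=> e_gt0; rewrite divr_gt0 // ltr0n. Qed.

Lemma eventually_inv_lt (R : realType) (e : R) :
  0 < e -> exists N : nat, forall n, (N <= n)%N -> n.+1%:R^-1 < e.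
Proof.
move=> e0; exists (Num.truncn e^-1) => n le_Nn.
rewrite invf_plt ?posrE ?ltr0Sn // (lt_le_trans (truncnS_gt _)) //.
by rewrite ler_nat ltnS.
Qed.

Section InnerProduct.
Variables (R : realType) (W : lmodType R[i]) (ip : W -> W -> R[i]).
Hypothesis ipP : is_inner_product ip.

Lemma ipDl x y z : ip (x + y) z = ip x z + ip y z.
Proof. by have := ip_linear ipP 1 x y z; rewrite scale1r mul1r. Qed.

Lemma ip0l z : ip 0 z = 0.
Proof. by apply: (addrI (ip 0 z)); rewrite -ipDl !addr0. Qed.

Lemma ipZl a x z : ip (a *: x) z = a * ip x z.
Proof. by have := ip_linear ipP a x 0 z; rewrite addr0 ip0l addr0. Qed.

Lemma ipNl x z : ip (- x) z = - ip x z.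
Proof. by rewrite -scaleN1r ipZl mulN1r. Qed.

Lemma ipBl x y z : ip (x - y) z = ip x z - ip y z.
Proof. by rewrite ipDl ipNl. Qed.

Lemma ipDr x y z : ip x (y + z) = ip x y + ip x z.
Proof. by rewrite !(ip_conj ipP _ x) ipDl rmorphD. Qed.

Lemma ipZr a x z : ip x (a *: z) = a^* * ip x z.
Proof. by rewrite !(ip_conj ipP _ x) ipZl rmorphM. Qed.

Lemma ip0r z : ip z 0 = 0.
Proof. by rewrite (ip_conj ipP) ip0l conjc0. Qed.

Lemma ipNr x z : ip x (- z) = - ip x z.
Proof. by rewrite !(ip_conj ipP _ x) ipNl rmorphN. Qed.

Lemma ipBr x y z : ip x (y - z) = ip x y - ip x z.
Proof. by rewrite ipDr ipNr. Qed.

Definition sqnorm x : R := Re (ip x x).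

Lemma ip_sqnorm x : ip x x = (sqnorm x)%:C.
Proof.
have := ip_ge0 ipP x; rewrite lecE /= => /andP[/eqP Im0 _].
by rewrite /sqnorm; case: (ip x x) Im0 => a b /= ->.
Qed.

Lemma sqnorm_ge0 x : 0 <= sqnorm x.
Proof. by have := ip_ge0 ipP x; rewrite ip_sqnorm lecR. Qed.

Lemma sqnorm_eq0 x : sqnorm x = 0 -> x = 0.
Proof. by move=> h; apply: (ip_eq0 ipP); rewrite ip_sqnorm h. Qed.

Lemma sqnormD x y : sqnorm (x + y) = sqnorm x + sqnorm y + 2 * Re (ip x y).
Proof.
rewrite /sqnorm ipDl !ipDr (ip_conj ipP x y) !raddfD /=.
by case: (ip x y) => a b /=; ring.
Qed.

Lemma sqnormZ a x : sqnorm (a *: x) = normc a ^+ 2 * sqnorm x.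
Proof.
apply: complexI; rewrite -ip_sqnorm ipZl ipZr mulrA mulcJ_normc ip_sqnorm.
by rewrite [RHS]rmorphM.
Qed.

Lemma sqnormN x : sqnorm (- x) = sqnorm x.
Proof. by rewrite /sqnorm ipNl ipNr opprK. Qed.

Lemma sqnorm_parallelogram v w :
  sqnorm (v - w) + sqnorm (v + w) = 2 * sqnorm v + 2 * sqnorm w.
Proof. by rewrite !sqnormD sqnormN ipNr raddfN /=; ring. Qed.

(* The value of t minimising the right-hand side gives Cauchy-Schwarz, and
   its first-order variation gives the orthogonality of best approximations. *)
Lemma sqnorm_sub_ip x y (t : R) :
  sqnorm (x - (t%:C * ip x y) *: y) =
  sqnorm x - 2 * t * normc (ip x y) ^+ 2 + t ^+ 2 * normc (ip x y) ^+ 2 * sqnorm y.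
Proof.
apply: complexI; rewrite -ip_sqnorm ipBl !ipBr !ipZl !ipZr !ip_sqnorm (ip_conj ipP x y).
case: (ip x y) => a b; rewrite /= sqr_sqrtr ?addr_ge0 ?sqr_ge0 //.
by apply/eqP; rewrite eq_complex /=; apply/andP; split; apply/eqP; ring.
Qed.

Definition hnorm x : R := Num.sqrt (sqnorm x).

Lemma hnorm_ge0 x : 0 <= hnorm x.
Proof. exact: sqrtr_ge0. Qed.

Lemma sqr_hnorm x : hnorm x ^+ 2 = sqnorm x.
Proof. by rewrite sqr_sqrtr // sqnorm_ge0. Qed.

Lemma hnorm_eq0 x : hnorm x = 0 -> x = 0.
Proof. by move=> h; apply: sqnorm_eq0; rewrite -sqr_hnorm h expr0n. Qed.

Lemma hnorm0 : hnorm 0 = 0.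
Proof. by rewrite /hnorm /sqnorm ip0l sqrtr0. Qed.

Lemma hnormZ a x : hnorm (a *: x) = normc a * hnorm x.
Proof. by rewrite /hnorm sqnormZ sqrtrM ?sqr_ge0 // sqrtr_sqr ger0_norm ?normc_ge0. Qed.

Lemma hnormN x : hnorm (- x) = hnorm x.
Proof. by rewrite -scaleN1r hnormZ normcN Normc.normc1 mul1r. Qed.

Lemma hnormB x y : hnorm (x - y) = hnorm (y - x).
Proof. by rewrite -hnormN opprB. Qed.

Lemma normc_ip_le x y : normc (ip x y) <= hnorm x * hnorm y.
Proof.
rewrite /hnorm -sqrtrM ?sqnorm_ge0 // -(ger0_norm (normc_ge0 (ip x y))) -sqrtr_sqr.
apply: ler_wsqrtr.
have [y0|ny0] := eqVneq (sqnorm y) 0.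
  by rewrite y0 mulr0 (sqnorm_eq0 y0) ip0r Normc.normc0 expr0n.
have y_gt0 : 0 < sqnorm y by rewrite lt_def ny0 sqnorm_ge0.
have := sqnorm_ge0 (x - ((sqnorm y)^-1%:C * ip x y) *: y).
rewrite sqnorm_sub_ip.
have -> : sqnorm x - 2 * (sqnorm y)^-1 * normc (ip x y) ^+ 2 +
    (sqnorm y)^-1 ^+ 2 * normc (ip x y) ^+ 2 * sqnorm y =
    sqnorm x - normc (ip x y) ^+ 2 / sqnorm y by field.
by rewrite subr_ge0 ler_pdivrMr // mulrC.
Qed.

Lemma hnormD x y : hnorm (x + y) <= hnorm x + hnorm y.
Proof.
rewrite -ler_sqr ?nnegrE ?addr_ge0 ?hnorm_ge0 // sqr_hnorm sqnormD sqrrD !sqr_hnorm.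
have := le_trans (Re_le_normc (ip x y)) (normc_ip_le x y).
lra.
Qed.

Lemma hnorm_distD x y z : hnorm (x - z) <= hnorm (x - y) + hnorm (y - z).
Proof. by rewrite -[x - z](subrKA y) hnormD. Qed.

Record is_subspace (S : W -> Prop) : Prop := IsSubspace {
  subspace0 : S 0;
  subspaceD : forall a b, S a -> S b -> S (a + b);
  subspaceZ : forall c a, S a -> S (c *: a) }.

Lemma subspaceB S : is_subspace S -> forall a b, S a -> S b -> S (a - b).
Proof.
move=> Ssub a b Sa Sb; rewrite -scaleN1r.
by apply: (subspaceD Ssub) => //; apply: (subspaceZ Ssub).
Qed.

Lemma perp_subspace S : is_subspace (perp ip S).
Proof.
split=> [x _|a b Sa Sb x Sx|c a Sa x Sx]; first exact: ip0r.
  by rewrite ipDr Sa // Sb // addr0.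
by rewrite ipZr Sa // mulr0.
Qed.

Lemma perp_self_eq0 S a : S a -> perp ip S a -> a = 0.
Proof. by move=> Sa /(_ a Sa); apply: (ip_eq0 ipP). Qed.

Definition orth_complemented (S : W -> Prop) :=
  forall x, exists s, S s /\ perp ip S (x - s).

Definition ncvg (u : nat -> W) (x : W) := forall e : R, 0 < e ->
  exists N, forall n, (N <= n)%N -> hnorm (u n - x) < e.

Definition ncauchy (u : nat -> W) := forall e : R, 0 < e ->
  exists N, forall n m, (N <= n)%N -> (N <= m)%N -> hnorm (u n - u m) < e.

Definition ncomplete := forall u, ncauchy u -> exists x, ncvg u x.

Lemma nsq_ltE x (e : R[i]) : 0 < e -> (nsq ip x < e) = (hnorm x < Num.sqrt (Re e)).
Proof.
move=> e_gt0; rewrite ltcE in e_gt0; case/andP: e_gt0 => /eqP Im_e Re_gt0.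
by rewrite /nsq ip_sqnorm ltcE /= Im_e eqxx /hnorm ltr_sqrt.
Qed.

Lemma Re_gt0 (e : R[i]) : 0 < e -> 0 < Re e.
Proof. by rewrite ltcE => /andP[]. Qed.

Lemma sqrC_gt0 (e : R) : 0 < e -> 0 < (e ^+ 2)%:C.
Proof. by move=> e_gt0; rewrite ltcR exprn_gt0. Qed.

Lemma converges_toP u x : converges_to ip u x <-> ncvg u x.
Proof.
split=> cvg_u e e_gt0.
  have [N HN] := cvg_u _ (sqrC_gt0 e_gt0); exists N => n /HN.
  by rewrite nsq_ltE ?sqrC_gt0 //= sqrtr_sqr gtr0_norm.
have sqrt_gt0 : 0 < Num.sqrt (Re e) by rewrite sqrtr_gt0 Re_gt0.
have [N HN] := cvg_u _ sqrt_gt0.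
by exists N => n /HN; rewrite nsq_ltE.
Qed.

Lemma cauchy_seqP u : cauchy_seq ip u <-> ncauchy u.
Proof.
split=> cauchy_u e e_gt0.
  have [N HN] := cauchy_u _ (sqrC_gt0 e_gt0); exists N => n m le_Nn le_Nm.
  by have := HN n m le_Nn le_Nm; rewrite nsq_ltE ?sqrC_gt0 //= sqrtr_sqr gtr0_norm.
have sqrt_gt0 : 0 < Num.sqrt (Re e) by rewrite sqrtr_gt0 Re_gt0.
have [N HN] := cauchy_u _ sqrt_gt0.
by exists N => n m le_Nn le_Nm; rewrite nsq_ltE // HN.
Qed.

Lemma ncvg_uniq u x y : ncvg u x -> ncvg u y -> x = y.
Proof.
move=> ux uy; apply/subr0_eq/hnorm_eq0/eqP.
rewrite eq_le hnorm_ge0 andbT; apply/ler_addgt0Pr => e e_gt0; rewrite add0r.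
have [N1 H1] := ux _ (half_gt0 e_gt0).
have [N2 H2] := uy _ (half_gt0 e_gt0).
have := H1 _ (leq_maxl N1 N2); have := H2 _ (leq_maxr N1 N2).
have := hnorm_distD x (u (maxn N1 N2)) y; rewrite (hnormB x (u _)); lra.
Qed.

Lemma ncvg_cauchy u x : ncvg u x -> ncauchy u.
Proof.
move=> ux e e_gt0; have [N HN] := ux _ (half_gt0 e_gt0).
exists N => n m /HN un /HN um.
have := hnorm_distD (u n) x (u m); rewrite (hnormB x); lra.
Qed.

Lemma ncvg_inv u x : (forall n, hnorm (u n - x) < n.+1%:R^-1) -> ncvg u x.
Proof.
move=> u_lt e /eventually_inv_lt[N HN]; exists N => n le_Nn.
exact: lt_trans (u_lt n) (HN n le_Nn).
Qed.

Definition ccvg (c : nat -> R[i]) (l : R[i]) := forall e : R, 0 < e ->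
  exists N, forall n, (N <= n)%N -> normc (c n - l) < e.

Lemma ccvg_uniq c l l' : ccvg c l -> ccvg c l' -> l = l'.
Proof.
move=> cl cl'; apply/subr0_eq/Normc.eq0_normc/eqP.
rewrite eq_le normc_ge0 andbT; apply/ler_addgt0Pr => e e_gt0; rewrite add0r.
have [N1 H1] := cl _ (half_gt0 e_gt0).
have [N2 H2] := cl' _ (half_gt0 e_gt0).
have := H1 _ (leq_maxl N1 N2); have := H2 _ (leq_maxr N1 N2).
have := normc_distD l (c (maxn N1 N2)) l'; rewrite -(normcN (l - c _)) opprB; lra.
Qed.

Lemma ccvg_le c l k : ccvg c l -> (forall n, normc (c n) <= k) -> normc l <= k.
Proof.
move=> cl c_le; apply/ler_addgt0Pr => e /cl[N /(_ N (leqnn N))].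
have := c_le N; have := normc_distD l (c N) 0; rewrite !subr0 -(normcN (l - c _)) opprB; lra.
Qed.

Lemma ncvg_ipr u x y : ncvg u x -> ccvg (fun n => ip y (u n)) (ip y x).
Proof.
move=> ux e e_gt0.
have y1_gt0 : 0 < hnorm y + 1 by rewrite ltr_wpDl ?hnorm_ge0.
have [N HN] := ux _ (divr_gt0 e_gt0 y1_gt0); exists N => n /HN un.
rewrite -ipBr (le_lt_trans (normc_ip_le _ _)) //.
have := hnorm_ge0 (u n - x); have := hnorm_ge0 y.
have : hnorm y * (e / (hnorm y + 1)) < e.
  by rewrite mulrA ltr_pdivrMr //; nra.
nra.
Qed.

Lemma ncvg_ipl u x y : ncvg u x -> ccvg (fun n => ip (u n) y) (ip x y).
Proof.
move=> /(ncvg_ipr y) uy e /uy[N HN]; exists N => n /HN.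
by rewrite -ipBr -ipBl (ip_conj ipP y) normcJ.
Qed.

Lemma best_approx_perp S x s : is_subspace S -> S s ->
  (forall t, S t -> hnorm (x - s) <= hnorm (x - t)) -> perp ip S (x - s).
Proof.
move=> Ssub Ss s_min t St; set z := x - s; set q := ip z t.
pose tau := (sqnorm t + 1)^-1.
have t_ge0 := sqnorm_ge0 t.
have tau_gt0 : 0 < tau by rewrite invr_gt0; lra.
have tau_lt : tau * sqnorm t < 1.
  by rewrite /tau mulrC ltr_pdivrMr ?mul1r; lra.
have : sqnorm z <= sqnorm (z - (tau%:C * q) *: t).
  rewrite -!sqr_hnorm ler_sqr ?nnegrE ?hnorm_ge0 // /z -addrA -opprD.
  by apply/s_min/(subspaceD Ssub) => //; apply: (subspaceZ Ssub).
rewrite sqnorm_sub_ip -/q => sqnorm_le.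
have q2_ge0 : 0 <= normc q ^+ 2 by rewrite sqr_ge0.
have : tau * normc q ^+ 2 <= 0.
  have : tau * normc q ^+ 2 * (2 - tau * sqnorm t) <= 0 by nra.
  nra.
rewrite pmulr_rle0 // => q2_le0.
have /Normc.eq0_normc q0 : normc q = 0.
  by apply/eqP; rewrite -sqrf_eq0 eq_le q2_le0 q2_ge0.
by rewrite (ip_conj ipP) -/q q0 conjc0.
Qed.

Lemma minimizing_ncauchy S x d (u : nat -> W) : is_subspace S -> 0 <= d ->
  (forall t, S t -> d <= hnorm (x - t)) -> (forall n, S (u n)) ->
  (forall n, hnorm (x - u n) < d + n.+1%:R^-1) -> ncauchy u.
Proof.
move=> Ssub d_ge0 d_le uS u_lt e e_gt0.
pose delta := e ^+ 2 / (8 * d + 4 + e ^+ 2).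
have e2_gt0 : 0 < e ^+ 2 by rewrite exprn_gt0.
have den_gt0 : 0 < 8 * d + 4 + e ^+ 2 by lra.
have delta_gt0 : 0 < delta by rewrite divr_gt0.
have delta_lt1 : delta < 1 by rewrite ltr_pdivrMr // mul1r; lra.
have delta_small : (8 * d + 4) * delta < e ^+ 2.
  by rewrite /delta mulrA ltr_pdivrMr //; nra.
have [N HN] := eventually_inv_lt delta_gt0.
exists N => n m le_Nn le_Nm.
rewrite hnormB -ltr_sqr ?nnegrE ?hnorm_ge0 ?(ltW e_gt0) //.
(* Parallelogram law: |u m - u n|^2 = 2|x - u n|^2 + 2|x - u m|^2 - 4|x - mid|^2,
   where the midpoint mid of u n and u m lies in S, so |x - mid| >= d. *)
have mid_ge : d <= hnorm (x - 2^-1 *: (u n + u m)).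
  by apply/d_le/(subspaceZ Ssub)/(subspaceD Ssub).
have := sqnorm_parallelogram (x - u n) (x - u m).
have -> : x - u n - (x - u m) = u m - u n by rewrite opprB addrC addrA subrK.
have -> : x - u n + (x - u m) = 2 *: (x - 2^-1 *: (u n + u m)).
  by rewrite scalerBr scalerA mulfV ?pnatr_eq0 // scale1r scaler_nat mulr2n addrACA opprD.
rewrite sqnormZ normcMn Normc.normc1 -!sqr_hnorm => pl.
have sqr_lt y : 0 <= y < d + delta -> y ^+ 2 < (d + delta) ^+ 2.
  by case/andP=> y_ge0 y_lt; rewrite ltr_sqr ?nnegrE // (le_trans y_ge0 (ltW y_lt)).
have un_lt : hnorm (x - u n) ^+ 2 < (d + delta) ^+ 2.
  by rewrite sqr_lt // hnorm_ge0 (lt_trans (u_lt n)) // ltrD2l HN.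
have um_lt : hnorm (x - u m) ^+ 2 < (d + delta) ^+ 2.
  by rewrite sqr_lt // hnorm_ge0 (lt_trans (u_lt m)) // ltrD2l HN.
have mid_sqr : d ^+ 2 <= hnorm (x - 2^-1 *: (u n + u m)) ^+ 2.
  by rewrite ler_sqr ?nnegrE ?hnorm_ge0.
have delta_sqr : delta ^+ 2 < delta by rewrite expr2 gtr_pMr.
have : (d + delta) ^+ 2 = d ^+ 2 + 2 * d * delta + delta ^+ 2 by ring.
nra.
Qed.

Section Completeness.
Hypothesis complete : ncomplete.

Lemma best_approx_exists S x : is_subspace S -> closed_set ip S ->
  exists2 s, S s & forall t, S t -> hnorm (x - s) <= hnorm (x - t).
Proof.
move=> Ssub S_closed.
pose D := fun r => exists2 s, S s & r = hnorm (x - s).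
have D_lb : classical_sets.lbound D 0 by move=> _ [s _ ->]; exact: hnorm_ge0.
have D_inf : classical_sets.has_inf D.
  by split; [exists (hnorm (x - 0)); exists 0 => //; exact: subspace0 | exists 0].
pose d := inf D.
have d_le t : S t -> d <= hnorm (x - t) by move=> St; apply: ge_inf D_inf.2 _ _; exists t.
have d_ge0 : 0 <= d by apply: lb_le_inf D_inf.1 D_lb.
have approx n : exists s, S s /\ hnorm (x - s) < d + n.+1%:R^-1.
  have inv_gt0 : 0 < n.+1%:R^-1 :> R by rewrite invr_gt0 ltr0Sn.
  have [_ [s Ss ->] lt_d] := inf_adherent inv_gt0 D_inf.
  by exists s.
have [u /all_and2[uS u_lt]] := choice approx.
have [s us] := complete (minimizing_ncauchy Ssub d_ge0 d_le uS u_lt).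
have Ss : S s by apply: (S_closed u) => //; apply/converges_toP.
exists s => // t St; apply: le_trans (d_le t St).
apply/ler_addgt0Pr => e e_gt0.
have [N1 H1] := us _ (half_gt0 e_gt0).
have [N2 H2] := eventually_inv_lt (half_gt0 e_gt0).
have := H1 _ (leq_maxl N1 N2); have := H2 _ (leq_maxr N1 N2).
have := u_lt (maxn N1 N2); have := hnorm_distD x (u (maxn N1 N2)) s.
move: (maxn N1 N2).+1%:R^-1 => i; lra.
Qed.

Lemma closed_orth_complemented S :
  is_subspace S -> closed_set ip S -> orth_complemented S.
Proof.
move=> Ssub S_closed x; have [s Ss s_min] := best_approx_exists x Ssub S_closed.
by exists s; split; last exact: best_approx_perp.
Qed.

Lemma closed_compl_ball S v r : closed_set ip S -> ~ S v -> 0 < r ->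
  exists2 rho, 0 < rho <= r & forall w, hnorm (w - v) < rho -> ~ S w.
Proof.
move=> S_closed nSv r_gt0; apply: contrapT => no_ball.
have near n : exists w, hnorm (w - v) < Num.min r n.+1%:R^-1 /\ S w.
  apply: contrapT => no_w; apply: no_ball; exists (Num.min r n.+1%:R^-1).
    by rewrite lt_min r_gt0 invr_gt0 ltr0Sn ge_min lexx.
  by move=> w w_lt Sw; apply: no_w; exists w.
have [u /all_and2[u_lt uS]] := choice near.
apply: nSv; apply: (S_closed u) => //; apply/converges_toP/ncvg_inv => n.
by have := u_lt n; rewrite lt_min => /andP[].
Qed.

Lemma nested_balls_limit (c : nat -> W) (r : nat -> R) :
  (forall n, 0 < r n) -> (forall n, r n <= n.+1%:R^-1) ->
  (forall n, hnorm (c n.+1 - c n) <= r n - r n.+1) ->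
  exists v, forall n, hnorm (v - c n) <= r n.
Proof.
move=> r_gt0 r_le c_step.
have nest k j : hnorm (c (k + j)%N - c k) <= r k - r (k + j)%N.
  elim: j => [|j IH]; first by rewrite addn0 !subrr hnorm0.
  have := hnorm_distD (c (k + j.+1)%N) (c (k + j)%N) (c k).
  by rewrite addnS; have := c_step (k + j)%N; lra.
have near k n : (k <= n)%N -> hnorm (c n - c k) <= r k - r n.
  by move=> /subnKC <-; apply: nest.
have c_cauchy : ncauchy c.
  move=> e e_gt0; have [N HN] := eventually_inv_lt (half_gt0 e_gt0).
  exists N => n m le_Nn le_Nm.
  have := hnorm_distD (c n) (c N) (c m); rewrite (hnormB (c N) (c m)).
  have := near N n le_Nn; have := near N m le_Nm; have := r_le N.
  have := HN N (leqnn N); have := r_gt0 n; have := r_gt0 m.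
  move: N.+1%:R^-1 => i; lra.
have [v cv] := complete c_cauchy.
exists v => k; apply/ler_addgt0Pr => e /cv[N HN].
have [n le_Nn le_kn] : exists2 n, (N <= n)%N & (k <= n)%N.
  by exists (maxn N k); rewrite ?leq_maxl ?leq_maxr.
have := HN n le_Nn; have := near k n le_kn; have := r_gt0 n.
by have := hnorm_distD v (c n) (c k); rewrite (hnormB v (c n)); lra.
Qed.

Lemma baire (E : nat -> W -> Prop) :
  (forall k, closed_set ip (E k)) -> (forall v, exists k, E k v) ->
  exists k v0 r, 0 < r /\ forall v, hnorm (v - v0) < r -> E k v.
Proof.
move=> E_closed E_cover; apply: contrapT => no_ball.
have step (p : nat * (W * R)) : exists q : W * R, 0 < p.2.2 ->
    [/\ 0 < q.2, q.2 <= p.2.2 / 2, hnorm (q.1 - p.2.1) <= p.2.2 / 2 &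
        forall w, hnorm (w - q.1) < 2 * q.2 -> ~ E p.1 w].
  case: p => k [c r] /=.
  have [r_gt0|r_le0] := ltP 0 r; last by exists (c, r) => r_gt0; exfalso; lra.
  have [v [v_near nEv]] : exists v, hnorm (v - c) < r / 2 /\ ~ E k v.
    apply: contrapT => all_E; apply: no_ball; exists k, c, (r / 2).
    split=> [|v v_lt]; first exact: half_gt0.
    by apply: contrapT => nEv; apply: all_E; exists v.
  have [rho /andP[rho_gt0 rho_le] rho_ball] :=
    closed_compl_ball (E_closed k) nEv (half_gt0 r_gt0).
  exists (v, rho / 2) => _ /=; split; [exact: half_gt0 | lra | exact: ltW |].
  by move=> w w_lt; apply: rho_ball; lra.
have [f f_spec] := choice step.
pose b := fix b n := if n is k.+1 then f (k, b k) else ((0 : W), (1 : R)).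
have b_gt0 n : 0 < (b n).2.
  by elim: n => [|n IH] //=; have [] := f_spec (n, b n) IH.
have b_spec n : [/\ (b n.+1).2 <= (b n).2 / 2, hnorm ((b n.+1).1 - (b n).1) <= (b n).2 / 2 &
    forall w, hnorm (w - (b n.+1).1) < 2 * (b n.+1).2 -> ~ E n w].
  by have [] := f_spec (n, b n) (b_gt0 n).
have b_le n : (b n).2 <= n.+1%:R^-1.
  elim: n => [|n IH]; first by rewrite /= invr1.
  have [half_le _ _] := b_spec n; apply: (le_trans half_le).
  apply: le_trans (_ : n.+1%:R^-1 / 2 <= _); first by rewrite ler_pM2r ?invr_gt0.
  rewrite -invfM lef_pV2 ?posrE ?mulr_gt0 ?ltr0Sn // -natrM ler_nat.
  by rewrite muln2 -addnn addSn ltnS leq_addl.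
have b_step n : hnorm ((b n.+1).1 - (b n).1) <= (b n).2 - (b n.+1).2.
  by have [? ? _] := b_spec n; lra.
have [v v_near] := nested_balls_limit b_gt0 b_le b_step.
have [k Ekv] := E_cover v; have [_ _ k_ball] := b_spec k.
by apply: (k_ball v) Ekv; have := v_near k.+1; have := b_gt0 k.+1; lra.
Qed.

Lemma uniform_boundedness (F : W -> Prop) :
  (forall v, exists M, forall a, F a -> normc (ip v a) <= M) ->
  exists C, forall a, F a -> hnorm a <= C.
Proof.
move=> F_weak.
pose E k v := forall a, F a -> normc (ip v a) <= k%:R.
have E_closed k : closed_set ip (E k).
  move=> u x uE /converges_toP ux a Fa.
  by apply: (ccvg_le (ncvg_ipl a ux)) => n; exact: uE.
have E_cover v : exists k, E k v.
  have [M HM] := F_weak v; exists (Num.truncn M).+1 => a Fa.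
  exact: le_trans (HM a Fa) (ltW (truncnS_gt M)).
have [k [v0 [r [r_gt0 ball_E]]]] := baire E_closed E_cover.
have ball_bound v a : hnorm v < r -> F a -> normc (ip v a) <= 2 * k%:R.
  move=> v_lt Fa.
  have Ev : E k (v + v0) by apply: ball_E; rewrite addrK.
  have E0 : E k v0 by apply: ball_E; rewrite subrr hnorm0.
  have := le_normcD (ip (v + v0) a) (- ip v0 a).
  rewrite normcN -ipBl addrK; have := Ev a Fa; have := E0 a Fa; lra.
exists (4 * k%:R / r) => a Fa.
have [a0|a_neq0] := eqVneq (hnorm a) 0.
  by rewrite a0 divr_ge0 ?mulr_ge0 // ltW.
have a_gt0 : 0 < hnorm a by rewrite lt_def a_neq0 hnorm_ge0.
pose c := r / (2 * hnorm a).
have c_gt0 : 0 < c by rewrite divr_gt0 // mulr_gt0.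
have ca : c * hnorm a = r / 2 by rewrite /c; field; apply/eqP; lra.
have ca_lt : hnorm (c%:C *: a) < r.
  by rewrite hnormZ normcR gtr0_norm // ca; lra.
have := ball_bound _ _ ca_lt Fa.
rewrite ipZl ip_sqnorm -rmorphM normcR ger0_norm ?(mulr_ge0 (ltW c_gt0) (sqnorm_ge0 a)) //.
rewrite -sqr_hnorm expr2 mulrA ca => bound.
by rewrite ler_pdivlMr //; nra.
Qed.

End Completeness.

Section OrthProjection.
Variable S : W -> Prop.
Hypotheses (Ssub : is_subspace S) (S_compl : orth_complemented S).

Definition oproj v : W := projT1 (cid (S_compl v)).

Lemma oproj_mem v : S (oproj v).
Proof. exact: (projT2 (cid (S_compl v))).1. Qed.

Lemma oproj_perp v : perp ip S (v - oproj v).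
Proof. exact: (projT2 (cid (S_compl v))).2. Qed.

Lemma oproj_uniq v s : S s -> perp ip S (v - s) -> oproj v = s.
Proof.
move=> Ss vs; apply/subr0_eq.
apply: (perp_self_eq0 (subspaceB Ssub (oproj_mem v) Ss)).
have := subspaceB (perp_subspace S) vs (oproj_perp v).
by rewrite opprB addrC addrA subrK.
Qed.

Lemma oproj_id s : S s -> oproj s = s.
Proof.
by move=> Ss; apply: oproj_uniq; rewrite // subrr; apply: subspace0 (perp_subspace S).
Qed.

Lemma oprojB a b : oproj (a - b) = oproj a - oproj b.
Proof.
apply: oproj_uniq; first by apply: (subspaceB Ssub); apply: oproj_mem.
suff -> : a - b - (oproj a - oproj b) = a - oproj a - (b - oproj b).
  by apply: (subspaceB (perp_subspace S)); apply: oproj_perp.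
by rewrite !opprB addrACA [RHS]addrACA [- b + _]addrC.
Qed.

Lemma hnorm_oproj_le v : hnorm (oproj v) <= hnorm v.
Proof.
apply: ler_wsqrtr; have := sqnormD (oproj v) (v - oproj v).
rewrite addrC subrK (oproj_perp v (oproj_mem v)) /= mulr0 addr0 => ->.
by rewrite lerDl sqnorm_ge0.
Qed.

Lemma ncvg_oproj u x : ncvg u x -> ncvg (fun n => oproj (u n)) (oproj x).
Proof.
move=> ux e /ux[N HN]; exists N => n /HN.
by rewrite -oprojB; apply: le_lt_trans (hnorm_oproj_le _).
Qed.

End OrthProjection.

Lemma closure_restriction (D : W -> Prop) (f : W -> W) (Q : op W) :
  dense_set ip D -> (forall u x, ncvg u x -> ncvg (fun n => f (u n)) (f x)) ->
  (forall x z, Q x z <-> D x /\ z = f x) ->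
  forall x z, closure_op ip Q x z <-> z = f x.
Proof.
move=> D_dense f_cont QE x z; split.
  move=> [u [v [Quv [/converges_toP ux /converges_toP vz]]]].
  have v_eq : v = fun n => f (u n).
    by apply: funext => n; have [_ ->] := (QE _ _).1 (Quv n).
  by move: vz; rewrite v_eq => vz; exact: ncvg_uniq vz (f_cont _ _ ux).
move=> ->; have [u [uD /converges_toP ux]] := D_dense x.
exists u, (fun n => f (u n)); split; first by move=> n; apply/QE.
by split; apply/converges_toP => //; apply: f_cont.
Qed.

End InnerProduct.

Section LinearOperators.
Variables (R : realType) (V : lmodType R[i]).
Implicit Types B : op V.

Lemma op_eqP B B' : op_eq B B' <-> B = B'.
Proof.
split=> [BB'|-> //]; apply: funext => x; apply: funext => y.
exact/propext/BB'.
Qed.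

Lemma linear_op_fun B x y y' : linear_op B -> B x y -> B x y' -> y = y'.
Proof. by case=> _ [_ [_ B_fun]]; exact: B_fun. Qed.

Lemma linear_opB B x y x' y' : linear_op B -> B x y -> B x' y' -> B (x - x') (y - y').
Proof.
case=> _ [BD [BZ _]] Bxy Bxy'; apply: BD Bxy _.
by rewrite -(scaleN1r x') -(scaleN1r y'); exact: BZ.
Qed.

Lemma linear_op_graph B : linear_op B -> is_subspace (fun p : V * V => B p.1 p.2).
Proof.
case=> B0 [BD [BZ _]].
by split=> [|[a1 a2] [b1 b2]|c [a1 a2]] //=; [apply: BD | apply: BZ].
Qed.

Lemma linear_op_range B : linear_op B -> is_subspace (range B).
Proof.
case=> B0 [BD [BZ _]]; split=> [|a b [x Bxa] [y Byb]|c a [x Bxa]]; first by exists 0.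
  by exists (x + y); apply: BD.
by exists (c *: x); apply: BZ.
Qed.

End LinearOperators.

Section ProductSpace.
Variables (R : realType) (V : lmodType R[i]) (ip : V -> V -> R[i]).
Hypothesis ipP : is_inner_product ip.

Definition ip_pair (p q : V * V) : R[i] := ip p.1 q.1 + ip p.2 q.2.

Lemma ip_pair_inner : is_inner_product ip_pair.
Proof.
split=> [a [x1 x2] [y1 y2] [z1 z2]|[x1 x2] [y1 y2]|[x1 x2]|[x1 x2]]; rewrite /ip_pair /=.
- by rewrite !(ip_linear ipP); ring.
- by rewrite (ip_conj ipP x1) (ip_conj ipP x2) rmorphD.
- by rewrite addr_ge0 ?(ip_ge0 ipP).
rewrite !(ip_sqnorm ipP) -rmorphD => /complexI sum0.
have := sqnorm_ge0 ipP x1; have := sqnorm_ge0 ipP x2 => ge0_2 ge0_1.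
have s1 : sqnorm ip x1 = 0 by lra.
have s2 : sqnorm ip x2 = 0 by lra.
by rewrite (sqnorm_eq0 ipP s1) (sqnorm_eq0 ipP s2).
Qed.

Lemma sqnorm_pair p : sqnorm ip_pair p = sqnorm ip p.1 + sqnorm ip p.2.
Proof. by rewrite /sqnorm /ip_pair raddfD. Qed.

Lemma hnorm_pair_fst p : hnorm ip p.1 <= hnorm ip_pair p.
Proof. by rewrite /hnorm ler_wsqrtr // sqnorm_pair lerDl sqnorm_ge0. Qed.

Lemma hnorm_pair_snd p : hnorm ip p.2 <= hnorm ip_pair p.
Proof. by rewrite /hnorm ler_wsqrtr // sqnorm_pair lerDr sqnorm_ge0. Qed.

Lemma hnorm_pair_le p : hnorm ip_pair p <= hnorm ip p.1 + hnorm ip p.2.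
Proof.
rewrite -ler_sqr ?nnegrE ?addr_ge0 ?hnorm_ge0 // (sqr_hnorm ip_pair_inner).
rewrite sqnorm_pair -!(sqr_hnorm ipP) sqrrD.
by have := mulr_ge0 (hnorm_ge0 ip p.1) (hnorm_ge0 ip p.2); lra.
Qed.

Lemma ncvg_pair u x : ncvg ip_pair u x <->
  ncvg ip (fun n => (u n).1) x.1 /\ ncvg ip (fun n => (u n).2) x.2.
Proof.
split=> [ux|[ux1 ux2] e e_gt0].
  by split=> e /ux[N HN]; exists N => n /HN;
    [exact: le_lt_trans (hnorm_pair_fst _) | exact: le_lt_trans (hnorm_pair_snd _)].
have [N1 H1] := ux1 _ (half_gt0 e_gt0); have [N2 H2] := ux2 _ (half_gt0 e_gt0).
exists (maxn N1 N2) => n; rewrite geq_max => /andP[/H1 un1 /H2 un2].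
by have := hnorm_pair_le (u n - x); rewrite /=; lra.
Qed.

Lemma ncomplete_pair : ncomplete ip -> ncomplete ip_pair.
Proof.
move=> complete u u_cauchy.
have [x1 ux1] : exists x1, ncvg ip (fun n => (u n).1) x1.
  apply: complete => e /u_cauchy[N HN]; exists N => n m le_Nn le_Nm.
  exact: le_lt_trans (hnorm_pair_fst _) (HN n m le_Nn le_Nm).
have [x2 ux2] : exists x2, ncvg ip (fun n => (u n).2) x2.
  apply: complete => e /u_cauchy[N HN]; exists N => n m le_Nn le_Nm.
  exact: le_lt_trans (hnorm_pair_snd _) (HN n m le_Nn le_Nm).
by exists (x1, x2); apply/ncvg_pair.
Qed.

Lemma closed_graph_set (B : op V) :
  closed_graph ip B -> closed_set ip_pair (fun p => B p.1 p.2).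
Proof.
move=> B_closed u x uB /(converges_toP ip_pair_inner)/ncvg_pair[ux1 ux2].
by apply: (B_closed (fun n => (u n).1) (fun n => (u n).2)) => //; apply/(converges_toP ipP).
Qed.

End ProductSpace.

Section Adjoint.
Variables (R : realType) (V : lmodType R[i]) (ip : V -> V -> R[i]).
Hypothesis ipP : is_inner_product ip.
Variable B : op V.
Local Notation B' := (adjoint ip B).

Lemma adjoint0 : B' 0 0.
Proof. by move=> x w _; rewrite !(ip0r ipP). Qed.

Lemma adjointD y z y' z' : B' y z -> B' y' z' -> B' (y + y') (z + z').
Proof.
by move=> Byz Byz' x w Bxw; rewrite !(ipDr ipP) (Byz _ _ Bxw) (Byz' _ _ Bxw).
Qed.

Lemma adjointZ c y z : B' y z -> B' (c *: y) (c *: z).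
Proof. by move=> Byz x w Bxw; rewrite !(ipZr ipP) (Byz _ _ Bxw). Qed.

Lemma adjointB y z y' z' : B' y z -> B' y' z' -> B' (y - y') (z - z').
Proof.
move=> Byz Byz'; apply: adjointD Byz _.
by rewrite -(scaleN1r y') -(scaleN1r z'); apply: adjointZ.
Qed.

Lemma adjoint_ncvg u v y z : (forall n, B' (u n) (v n)) ->
  ncvg ip u y -> ncvg ip v z -> B' y z.
Proof.
move=> uv uy vz x w Bxw.
have uv_ip : (fun n => ip w (u n)) = (fun n => ip x (v n)).
  by apply: funext => n; exact: uv n x w Bxw.
by apply: (ccvg_uniq (ncvg_ipr ipP w uy)); rewrite uv_ip; exact: ncvg_ipr.
Qed.

Lemma sub_biadjoint x w : B x w -> adjoint ip B' x w.
Proof. by move=> Bxw y z Byz; rewrite (ip_conj ipP) -(Byz _ _ Bxw) -(ip_conj ipP). Qed.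

Lemma kernel_adjoint : kernel B' = perp ip (range B).
Proof.
apply: funext => y; apply: propext; split=> [By0 w [x Bxw]|y_perp x w Bxw].
  by rewrite (By0 _ _ Bxw) (ip0r ipP).
by rewrite (ip0r ipP); apply: y_perp; exists x.
Qed.

Lemma range_perp_kernel_adjoint m : range B m -> perp ip (kernel B') m.
Proof.
by move=> Bm y; rewrite kernel_adjoint => /(_ m Bm) ym; rewrite (ip_conj ipP) ym conjc0.
Qed.

Lemma range_adjoint_perp_kernel a : range B' a -> perp ip (kernel B) a.
Proof. by move=> [c Bca] y By0; have := Bca _ _ By0; rewrite (ip0l ipP) => <-. Qed.

Lemma kernel_adjoint_mul : kernel (op_mul B' B) = kernel B.
Proof.
apply: funext => z; apply: propext; split=> [[y [Bzy B'y0]]|Bz0]; last first.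
  by exists 0; split=> //; apply: adjoint0.
suff y0 : y = 0 by rewrite /kernel -y0.
by apply: (ip_eq0 ipP); rewrite (B'y0 _ _ Bzy) (ip0r ipP).
Qed.

Lemma range_adjoint_of_range : orth_complemented ip (range B) ->
  forall p, range B' p -> exists m, range B m /\ B' m p.
Proof.
move=> B_compl p [a B'ap]; have [m [Bm am_perp]] := B_compl a.
exists m; split => //; rewrite -(subKr a m) -[p]subr0.
by apply: adjointB B'ap _; rewrite -/(kernel B' _) kernel_adjoint.
Qed.

Lemma range_adjoint_mul : orth_complemented ip (range B) ->
  range (op_mul B' B) = range B'.
Proof.
move=> B_compl; apply: funext => p; apply: propext; split.
  by move=> [x [y [_ B'yp]]]; exists y.
by move=> /(range_adjoint_of_range B_compl)[m [[x Bxm] B'mp]]; exists x, m.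
Qed.

Lemma mp_inverseE y1 y2 z :
  is_subspace (range B) -> range B y1 -> perp ip (range B) y2 ->
  mp_inverse ip B (y1 + y2) z <-> B z y1 /\ perp ip (kernel B) z.
Proof.
move=> Bsub By1 y2_perp; split=> [[y1' [y2' [E [By1' [y2'_perp [Bz z_perp]]]]]]|[Bz z_perp]].
  suff -> : y1 = y1' by [].
  apply/subr0_eq/(perp_self_eq0 ipP (subspaceB Bsub By1 By1')).
  have -> : y1 - y1' = y2' - y2.
    by rewrite -[y1 - y1'](addrKA y2) E [y1' + y2']addrC [y2 + y1']addrC addrKA.
  by apply: (subspaceB (perp_subspace ipP (range B))).
by exists y1, y2; do !split => //; exists z.
Qed.

Lemma mp_inverse_range {y z} : is_subspace (range B) -> range B y ->
  mp_inverse ip B y z <-> B z y /\ perp ip (kernel B) z.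
Proof.
move=> Bsub By; rewrite -{1}[y]addr0 mp_inverseE // => x _.
exact: (ip0r ipP).
Qed.

End Adjoint.

Section ClosedRangeOperator.
Variables (R : realType) (V : lmodType R[i]) (ip : V -> V -> R[i]) (T : op V).
Hypotheses (ipP : is_inner_product ip) (complete : ncomplete ip).
Hypotheses (Tlin : linear_op T) (Tclosed : closed_graph ip T).
Hypotheses (Tdense : densely_defined ip T) (Trange : closed_range ip T).
Local Notation A := (adjoint ip T).

Lemma dense_perp_eq0 y : perp ip (dom T) y -> y = 0.
Proof.
move=> y_perp; have [u [uT /(converges_toP ipP) uy]] := Tdense y.
apply/(ip_eq0 ipP)/Normc.eq0_normc/eqP; rewrite eq_le normc_ge0 andbT.
by apply: (ccvg_le (ncvg_ipl ipP y uy)) => n; rewrite (y_perp _ (uT n)) Normc.normc0.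
Qed.

Lemma adjoint_fun y z z' : A y z -> A y z' -> z = z'.
Proof.
move=> Ayz Ayz'; apply/subr0_eq/dense_perp_eq0 => x [w Txw].
by rewrite (ipBr ipP) -(Ayz _ _ Txw) -(Ayz' _ _ Txw) subrr.
Qed.

Lemma adjoint_linear : linear_op A.
Proof.
split; first exact: adjoint0.
split; first by move=> *; apply: adjointD.
by split; [move=> *; apply: adjointZ | exact: adjoint_fun].
Qed.

(* Project (y, z) onto the closed graph of T in V x V: the residual (p, q)
   satisfies A q (- p) and adjoint A p q, hence - |p|^2 = |q|^2. *)
Lemma biadjoint : adjoint ip A = T.
Proof.
apply/op_eqP => y z; split; last exact: sub_biadjoint.
move=> AAyz.
have [[x w] [Txw perpG]] := closed_orth_complemented (ip_pair_inner ipP)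
  (ncomplete_pair ipP complete) (linear_op_graph Tlin) (closed_graph_set ipP Tclosed) (y, z).
rewrite /= in Txw; set p := y - x; set q := z - w.
have Aq : A q (- p).
  move=> x' w' Tx'w'; have := perpG (x', w') Tx'w'.
  by rewrite /ip_pair /= (ipNr ipP) addrC => /eqP; rewrite addr_eq0 => /eqP.
have := adjointB ipP AAyz (sub_biadjoint ipP Txw) Aq.
rewrite -/p -/q (ipNl ipP) !(ip_sqnorm ipP) -rmorphN => /complexI pq.
have := sqnorm_ge0 ipP p; have := sqnorm_ge0 ipP q => q_ge0 p_ge0.
have /(sqnorm_eq0 ipP)/subr0_eq -> : sqnorm ip p = 0 by lra.
by have /(sqnorm_eq0 ipP)/subr0_eq -> : sqnorm ip q = 0 by lra.
Qed.

Lemma kernel_perp_range_adjoint : kernel T = perp ip (range A).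
Proof. by rewrite -{1}biadjoint (kernel_adjoint ipP). Qed.

Lemma range_orth_complemented : orth_complemented ip (range T).
Proof. exact: (closed_orth_complemented ipP complete (linear_op_range Tlin) Trange). Qed.

(* Hellinger-Toeplitz: the set of a in R(T) with |A a| <= 1 is weakly bounded,
   since <v, a> = <x, A a> where T x is the projection of v onto R(T). *)
Lemma adjoint_bounded_below : exists2 C, 0 < C &
  forall a c, range T a -> A a c -> hnorm ip a <= C * hnorm ip c.
Proof.
pose F a := range T a /\ exists2 c, A a c & hnorm ip c <= 1.
have F_weak v : exists M, forall a, F a -> normc (ip v a) <= M.
  have [k [[x Txk] vk_perp]] := range_orth_complemented v.
  exists (hnorm ip x) => a [Ta [c Aac c_le1]].
  have -> : ip v a = ip x c.
    rewrite -(Aac _ _ Txk) -[v](subrK k) (ipDl ipP) (ip_conj ipP a (v - k)).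
    by rewrite (vk_perp _ Ta) conjc0 add0r.
  exact: (le_trans (normc_ip_le ipP _ _) (ler_piMr (hnorm_ge0 ip x) c_le1)).
have [C C_bound] := uniform_boundedness ipP complete F_weak.
exists (`|C| + 1) => [|a c Ta Aac]; first by rewrite ltr_wpDl.
have [c0|c_neq0] := eqVneq (hnorm ip c) 0.
  suff -> : a = 0 by rewrite c0 mulr0 hnorm0.
  apply: (perp_self_eq0 ipP Ta); rewrite -(kernel_adjoint ipP).
  by rewrite /kernel -(hnorm_eq0 ipP c0).
have c_gt0 : 0 < hnorm ip c by rewrite lt_def c_neq0 hnorm_ge0.
pose l := (hnorm ip c)^-1.
have l_gt0 : 0 < l by rewrite invr_gt0.
have : F (l%:C *: a).
  split; first exact: subspaceZ (linear_op_range Tlin) _ _ Ta.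
  exists (l%:C *: c); first exact: adjointZ.
  by rewrite (hnormZ ipP) normcR gtr0_norm // mulVf.
move=> /C_bound; rewrite (hnormZ ipP) normcR gtr0_norm // => la_le.
have := ler_norm C; have := hnorm_ge0 ip a.
have : hnorm ip a = l * hnorm ip a * hnorm ip c by rewrite mulrAC mulVf ?mul1r.
nra.
Qed.

Lemma range_adjoint_closed : closed_set ip (range A).
Proof.
move=> u y uA /(converges_toP ipP) uy.
have [k /all_and2[kT Ak]] :=
  choice (fun n => range_adjoint_of_range ipP range_orth_complemented (uA n)).
have [C C_gt0 C_bound] := adjoint_bounded_below.
have k_cauchy : ncauchy ip k.
  move=> e e_gt0; have [N HN] := ncvg_cauchy ipP uy (divr_gt0 e_gt0 C_gt0).
  exists N => n m le_Nn le_Nm.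
  have := C_bound _ _ (subspaceB (linear_op_range Tlin) (kT n) (kT m))
    (adjointB ipP (Ak n) (Ak m)).
  by have := HN n m le_Nn le_Nm; rewrite ltr_pdivlMr // mulrC; lra.
have [x kx] := complete k_cauchy.
by exists x; apply: (adjoint_ncvg ipP Ak kx uy).
Qed.

Lemma range_adjoint_orth_complemented : orth_complemented ip (range A).
Proof.
exact: (closed_orth_complemented ipP complete (linear_op_range adjoint_linear)
  range_adjoint_closed).
Qed.

Local Notation P := (oproj range_adjoint_orth_complemented).

Lemma range_of_range_adjoint k : range T k -> exists2 z, range A z & T z k.
Proof.
move=> Tk; have AAk : range (adjoint ip A) k by rewrite biadjoint.
have [z [Az AAzk]] := range_adjoint_of_range ipP range_adjoint_orth_complemented AAk.
by exists z; rewrite // -biadjoint.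
Qed.

Lemma range_mul_adjoint : range (op_mul T A) = range T.
Proof.
by rewrite -{1}biadjoint (range_adjoint_mul ipP range_adjoint_orth_complemented) biadjoint.
Qed.

Lemma kernel_mul_adjoint : kernel (op_mul T A) = kernel A.
Proof. by rewrite -{1}biadjoint (kernel_adjoint_mul ipP). Qed.

Lemma oproj_kernel x : kernel T (x - P x).
Proof. by rewrite kernel_perp_range_adjoint; exact: oproj_perp. Qed.

Lemma cauchy_dual_adjoint_mulE x z :
  op_mul (cauchy_dual ip A) T x z <-> dom T x /\ z = P x.
Proof.
rewrite /cauchy_dual biadjoint.
have TA_sub : is_subspace (range (op_mul T A)).
  by rewrite range_mul_adjoint; exact: linear_op_range.
split=> [[v [Txv [m [mp_vm Amz]]]]|[[w Txw] ->]].
- have Tv : range (op_mul T A) v by rewrite range_mul_adjoint; exists x.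
  move: mp_vm => /(mp_inverse_range ipP TA_sub Tv)[[z' [Amz' Tz'v]] _].
  rewrite (adjoint_fun Amz' Amz) in Tz'v.
  split; first by exists v.
  apply/esym/(oproj_uniq ipP (linear_op_range adjoint_linear)); first by exists m.
  by rewrite -kernel_perp_range_adjoint; have := linear_opB Tlin Txv Tz'v; rewrite subrr.
- have TPx : T (P x) w.
    by have := linear_opB Tlin Txw (oproj_kernel x); rewrite subKr subr0.
  have [m [Tm AmPx]] := range_adjoint_of_range ipP range_orth_complemented
    (oproj_mem range_adjoint_orth_complemented x).
  have Tw : range (op_mul T A) w by rewrite range_mul_adjoint; exists x.
  exists w; split => //; exists m; split => //.
  apply/(mp_inverse_range ipP TA_sub Tw); split; first by exists (P x).
  by rewrite kernel_mul_adjoint; exact: range_perp_kernel_adjoint.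
Qed.

Lemma closure_cauchy_dual_adjoint_mulE x z :
  closure_op ip (op_mul (cauchy_dual ip A) T) x z <-> z = P x.
Proof.
apply: (closure_restriction ipP Tdense _ cauchy_dual_adjoint_mulE).
exact: (ncvg_oproj ipP (linear_op_range adjoint_linear)).
Qed.

Lemma closure_cauchy_dual_adjoint_mul_adjoint :
  op_eq (op_mul (closure_op ip (op_mul (cauchy_dual ip A) T)) A) A.
Proof.
have P_id y z : A y z -> P z = z.
  by move=> Ayz; apply: (oproj_id ipP (linear_op_range adjoint_linear)); exists y.
move=> y z; split=> [[w [Ayw /closure_cauchy_dual_adjoint_mulE ->]]|Ayz].
  by rewrite (P_id _ _ Ayw).
by exists z; split=> //; apply/closure_cauchy_dual_adjoint_mulE; rewrite (P_id _ _ Ayz).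
Qed.

Lemma mul_adjoint_cauchy_dual : op_eq (op_mul (op_mul T A) (cauchy_dual ip T)) T.
Proof.
move=> y z.
have AT_sub : is_subspace (range (op_mul A T)).
  rewrite (range_adjoint_mul ipP range_orth_complemented).
  exact: linear_op_range adjoint_linear.
(* (A T)^+ sees y only through its projection P y onto R(A T) = R(A). *)
have mpE z0 : mp_inverse ip (op_mul A T) y z0 <->
    op_mul A T z0 (P y) /\ perp ip (kernel T) z0.
  have {1}-> : y = P y + (y - P y) by rewrite addrC subrK.
  rewrite -(kernel_adjoint_mul ipP) mp_inverseE //.
    by rewrite (range_adjoint_mul ipP range_orth_complemented); exact: oproj_mem.
  by rewrite (range_adjoint_mul ipP range_orth_complemented); exact: oproj_perp.
rewrite /cauchy_dual; split.
- move=> [m [[z0 [/mpE[[a [Tz0a AaPy]] _] Tz0m]] [b [Amb Tbz]]]].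
  rewrite (linear_op_fun Tlin Tz0m Tz0a) in Amb; rewrite (adjoint_fun Amb AaPy) in Tbz.
  have [_ [TD _]] := Tlin.
  by have := TD _ _ _ _ Tbz (oproj_kernel y); rewrite addrC subrK addr0.
- move=> Tyz.
  have TPy : T (P y) z by have := linear_opB Tlin Tyz (oproj_kernel y); rewrite subKr subr0.
  have [m [Tm AmPy]] := range_adjoint_of_range ipP range_orth_complemented
    (oproj_mem range_adjoint_orth_complemented y).
  have [z0 Az0 Tz0m] := range_of_range_adjoint Tm.
  exists m; split; last by exists (P y).
  exists z0; split => //; apply/mpE; split; first by exists m.
  exact: (range_adjoint_perp_kernel ipP Az0).
Qed.

End ClosedRangeOperator.

Theorem theorem2p2 (R : realType) (V : lmodType R[i]) (ip : V -> V -> R[i])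
  (T : op V) :
  is_hilbert ip ->
  closed_op ip T -> densely_defined ip T -> closed_range ip T ->
  (selfadjoint ip T <->
     op_eq T (op_mul (closure_op ip (op_mul (cauchy_dual ip (adjoint ip T)) T))
                     (adjoint ip T))) /\
  (selfadjoint ip T <->
     op_eq (adjoint ip T) (op_mul (op_mul T (adjoint ip T)) (cauchy_dual ip T))).
Proof.
move=> [ipP complete] [Tlin Tclosed] Tdense Trange.
have ncompl : ncomplete ip.
  by move=> u /(cauchy_seqP ipP)/complete[x /(converges_toP ipP)]; exists x.
have /op_eqP -> :=
  closure_cauchy_dual_adjoint_mul_adjoint ipP ncompl Tlin Tclosed Tdense Trange.
have /op_eqP -> := mul_adjoint_cauchy_dual ipP ncompl Tlin Tclosed Tdense Trange.
by split; last by split=> TA x y; apply: iff_sym.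
Qed.
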